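(* (a) There are at most countably many homeomorphism classes of spaces $(\mathbb{R},\tau)$ with $\tau\in\mathcal{T}$ and $(\mathbb{R},\tau)$ locally connected. (b) If $\tau\in\mathcal{T}$ and $(\mathbb{R},\tau)$ is locally connected and separable, then there is a real function $F$ with $\tau=\tau[F]$, and the set $\Gamma(\tau)$ is countable and closed in the Euclidean topology.
   Context: $\eta$ denotes the Euclidean topology on $\mathbb{R}$; $\mathcal{T}$ is the family of all topologies on $\mathbb{R}$ finer than $\eta$. $\Gamma(\tau)=\{x\in\mathbb{R}:\mathcal{U}_\eta(x)\neq\mathcal{U}_\tau(x)\}$ where $\mathcal{U}_\tau(x)$ is the neighborhood filter of $x$. For a function $F:\mathbb{R}\to\mathbb{R}$, $\tau[F]$ is the topology on $\mathbb{R}$ in which $U\subset\mathbb{R}$ is open iff $U=\{x\in\mathbb{R} : (x,F(x))\in V\}$ for some open $V\subset\mathbb{R}^2$; equivalently, the unique topology making $x\mapsto(x,F(x))$ a homeomorphism onto the graph of $F$ with its subspace topology from $\mathbb{R}^2$. *)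

(* the real line is an arbitrary realType R,
   with its Euclidean topology [open]/[closed]; R * R carries the product
   (= Euclidean) topology. *)
From HB Require Import structures.
From mathcomp Require Import all_boot all_order all_algebra.
From mathcomp Require Import all_classical all_reals.
From mathcomp Require Import topology normedtype.
Set Implicit Arguments. Unset Strict Implicit. Unset Printing Implicit Defensive.
Import Order.TTheory GRing.Theory Num.Theory.
Local Open Scope classical_set_scope.
Local Open Scope ring_scope.

Section Defs.
Variable R : realType.

Definition is_topology (tau : set (set R)) : Prop :=
  [/\ tau setT, tau set0,
      (forall U V, tau U -> tau V -> tau (U `&` V)) &
      (forall S : set (set R), S `<=` tau -> tau (\bigcup_(A in S) A))].

Definition eta : set (set R) := [set U | @open R^o U].

Definition finer_than_eta (tau : set (set R)) : Prop :=
  is_topology tau /\ eta `<=` tau.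

Definition nbhd_of (tau : set (set R)) (x : R) (N : set R) : Prop :=
  exists V, [/\ tau V, V x & V `<=` N].

Definition connected_in (tau : set (set R)) (A : set R) : Prop :=
  ~ exists U1 U2, [/\ tau U1, tau U2, A `<=` U1 `|` U2,
                     A `&` U1 `&` U2 = set0 &
                     (A `&` U1 !=set0 /\ A `&` U2 !=set0)].

Definition locally_connected_top (tau : set (set R)) : Prop :=
  forall x U, tau U -> U x ->
    exists N, [/\ nbhd_of tau x N, N `<=` U & connected_in tau N].

Definition separable_top (tau : set (set R)) : Prop :=
  exists D : set R, countable D /\
    forall U, tau U -> U !=set0 -> U `&` D !=set0.

Definition homeomorphic_top (tau1 tau2 : set (set R)) : Prop :=
  exists h g : R -> R, [/\ cancel h g, cancel g h,
     (forall U, tau2 U -> tau1 (h @^-1` U)) &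
     (forall U, tau1 U -> tau2 (g @^-1` U))].

Definition Gamma (tau : set (set R)) : set R :=
  [set x | ~ (forall N, nbhd_of eta x N <-> nbhd_of tau x N)].

Definition tau_of (F : R -> R) : set (set R) :=
  [set U | exists V : set (R^o * R^o)%type, open V /\ U = [set x | V (x, F x)]].

End Defs.

(* The components of (R, tau) are intervals and tau-open, and tau is generated by
   the Euclidean balls cut down to components. Gamma(tau) is the set of points
   that are not Euclidean-interior to their component: it is Euclidean-closed and
   meets each component in at most its two end points. A countable dense set
   meets every component, so there are countably many of them, and tau = tau[F]
   for F a labelling of the components by integers.
   Up to homeomorphism, tau is determined by the set of one-point components and
   by the number of the other components of each of the four end types (these
   are countably many, each containing a rational): any two intervals of the
   same end type are homeomorphic through an affine map in the chart
   x / (1 + |x|). The set of one-point components is countable or has the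
   cardinality of R, since up to a countable set it is contained in the closed
   set Gamma, which allows a Cantor scheme. *)
From Pilot Require Import Defs.
From HB Require Import structures.
From mathcomp Require Import all_boot all_order all_algebra.
From mathcomp Require Import all_classical all_reals.
From mathcomp Require Import topology normedtype.
From mathcomp.algebra_tactics Require Import lra ring.

Set Implicit Arguments. Unset Strict Implicit. Unset Printing Implicit Defensive.
Import Order.TTheory GRing.Theory Num.Theory numFieldTopology.Exports.
Local Open Scope classical_set_scope.
Local Open Scope ring_scope.

Section EuclideanOpen.
Variable R : realType.
Local Notation eta := (@Defs.eta R).
Implicit Types (U : set R) (x y c : R).

Lemma etaP U :
  eta U <-> forall x, U x -> exists2 e, 0 < e & forall y, `|y - x| < e -> U y.
Proof.
rewrite /Defs.eta /= openE; split => [H x /H /nbhs_ballP [e e0 He]|H x /H [e e0 He]].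
  by exists e => // y hy; apply: He; rewrite -ball_normE /= distrC.
apply/nbhs_ballP; exists e => // y; rewrite -ball_normE /= => hy.
by apply: He; rewrite distrC.
Qed.

Lemma eta_ltr c : eta [set y : R | y < c].
Proof.
apply/etaP => x /= xc; exists (c - x); first lra.
by move=> y; rewrite ltr_distl => /andP[h1 h2]; lra.
Qed.

Lemma eta_gtr c : eta [set y : R | c < y].
Proof.
apply/etaP => x /= xc; exists (x - c); first lra.
by move=> y; rewrite ltr_distl => /andP[h1 h2]; lra.
Qed.

Lemma eta_ball x e : eta [set y : R | `|y - x| < e].
Proof.
apply/etaP => z /= hz; exists (e - `|z - x|); first lra.
by move=> y hy; have := ler_distD z y x; lra.
Qed.

Lemma natr_dist_lt1 (m n : nat) : `|(m%:R : R) - n%:R| < 1 -> m = n.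
Proof.
move=> H; case: (ltngtP m n) => // h; exfalso.
- have : (m.+1%:R : R) <= n%:R by rewrite ler_nat.
  rewrite -natr1 => h1; move: H; rewrite distrC ger0_norm; lra.
- have : (n.+1%:R : R) <= m%:R by rewrite ler_nat.
  rewrite -natr1 => h1; move: H; rewrite ger0_norm; lra.
Qed.

End EuclideanOpen.

Definition is_interval (R : realType) (C : set R) :=
  forall a b z, C a -> C b -> a < z -> z < b -> C z.

Section Components.
Variable R : realType.
Local Notation eta := (@Defs.eta R).
Variable tau : set (set R).
Hypothesis tau_top : is_topology tau.
Hypothesis eta_tau : eta `<=` tau.
Hypothesis tau_lc : locally_connected_top tau.

Local Notation connected := (connected_in tau).

Lemma tauT : tau setT. Proof. by case: tau_top. Qed.

Lemma tauI U V : tau U -> tau V -> tau (U `&` V).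
Proof. by case: tau_top => _ _ + _; apply. Qed.

Lemma tau_local W : (forall x, W x -> exists V, [/\ tau V, V x & V `<=` W]) -> tau W.
Proof.
move=> H.
have -> : W = \bigcup_(V in [set V | tau V /\ V `<=` W]) V.
  apply/seteqP; split => [x Wx|x [V [_ VW] Vx]]; last exact: VW.
  by have [V [tV Vx VW]] := H x Wx; exists V.
by case: tau_top => _ _ _; apply => V [].
Qed.

Lemma tauU U V : tau U -> tau V -> tau (U `|` V).
Proof.
move=> tU tV; apply: tau_local => x [Ux|Vx].
- by exists U; split => // y; left.
- by exists V; split => // y; right.
Qed.

Lemma connected_separated A B U1 U2 a b : connected A -> A `<=` B -> tau U1 -> tau U2 ->
  B `<=` U1 `|` U2 -> B `&` U1 `&` U2 = set0 -> A a -> U1 a -> A b -> U2 b -> False.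
Proof.
move=> cA AB t1 t2 cov dis Aa U1a Ab U2b; apply: cA; exists U1, U2; split => //.
- by move=> y /AB /cov.
- apply/seteqP; split => // y [[Ay U1y] U2y]; rewrite -dis; split => //; split => //.
  exact: AB.
- by split; [exists a|exists b].
Qed.

Lemma connected_interval A : connected A -> is_interval A.
Proof.
move=> cA a b z Aa Ab az zb; apply: contrapT => nAz.
apply: (@connected_separated A A [set y | y < z] [set y | z < y] a b) => //.
- exact/eta_tau/eta_ltr.
- exact/eta_tau/eta_gtr.
- move=> y Ay; case: (ltgtP y z) => [yz|zy|yz]; [by left|by right|by subst].
- by apply/seteqP; split => // y [[_ /= h1] /= h2]; have := lt_trans h1 h2; rewrite ltxx.
Qed.

Lemma connected1 x : connected [set x].
Proof.
move=> [U1 [U2 [_ _ _ h [[y [/= yx U1y]] [z [/= zx U2z]]]]]]; subst y z.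
by have : ([set x] `&` U1 `&` U2) x by []; rewrite h.
Qed.

Lemma connectedU A B x : connected A -> connected B -> A x -> B x -> connected (A `|` B).
Proof.
move=> cA cB Ax Bx [U1 [U2 [t1 t2 cov dis [[y [ABy U1y]] [z [ABz U2z]]]]]].
have sA : A `<=` A `|` B by move=> ? ?; left.
have sB : B `<=` A `|` B by move=> ? ?; right.
case: (cov x (sA _ Ax)) => [U1x|U2x].
- case: ABz => [Az|Bz].
  + exact: (connected_separated cA sA t1 t2 cov dis Ax U1x Az U2z).
  + exact: (connected_separated cB sB t1 t2 cov dis Bx U1x Bz U2z).
- case: ABy => [Ay|By].
  + exact: (connected_separated cA sA t1 t2 cov dis Ay U1y Ax U2x).
  + exact: (connected_separated cB sB t1 t2 cov dis By U1y Bx U2x).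
Qed.

Definition component x := [set y | exists A, [/\ connected A, A x & A y]].

Lemma component_refl x : component x x.
Proof. by exists [set x]; split => //; apply: connected1. Qed.

Lemma component_sym x y : component x y -> component y x.
Proof. by move=> [A [cA Ax Ay]]; exists A. Qed.

Lemma component_trans x y z : component x y -> component y z -> component x z.
Proof.
move=> [A [cA Ax Ay]] [B [cB By Bz]]; exists (A `|` B); split.
- exact: (connectedU cA cB Ay By).
- by left.
- by right.
Qed.

Lemma component_eq x y : component x y -> component x = component y.
Proof.
move=> cxy; apply/seteqP; split => z h.
- exact: component_trans (component_sym cxy) h.
- exact: component_trans cxy h.
Qed.

Lemma component_interval x : is_interval (component x).
Proof.
move=> a b z ca cb az zb.
have [A [cA Aa Ab]] := component_trans (component_sym ca) cb.
apply: component_trans ca _; exists A; split => //.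
exact: (connected_interval cA Aa Ab az zb).
Qed.

Lemma component_open x : tau (component x).
Proof.
apply: tau_local => y cy.
have [N [[V [tV Vy VN]] _ cN]] := tau_lc tauT (I : setT y).
exists V; split => // z /VN Nz; rewrite (component_eq cy).
by exists N; split => //; exact: VN.
Qed.

(* A tau-open set is, near each of its points x, a Euclidean ball cut down to
   the component of x; the connected neighbourhood of x given by local
   connectedness reaches out on each side of x unless the component stops at x. *)
Lemma tau_component_ball W x : tau W -> W x ->
  exists2 d, 0 < d & forall y, `|y - x| < d -> component x y -> W y.
Proof.
move=> tW Wx.
have [N [[V [tV Vx VN]] NW cN]] := tau_lc tW Wx.
have Nx := VN _ Vx.
have [d1 d10 H1] : exists2 d1, 0 < d1 &
    forall y, y < x -> x - d1 < y -> component x y -> W y.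
  case: (pselect (exists a, a < x /\ N a)) => [[a [ax Na]]|nL].
  - exists (x - a); first lra.
    move=> y yx ay _; apply: NW; apply: (connected_interval cN Na Nx) => //; lra.
  - exists 1 => // y yx _ [A [cA Ax Ay]]; exfalso.
    apply: (@connected_separated A A [set z | z < x] (V `|` [set z | x < z]) y x) => //.
    + exact/eta_tau/eta_ltr.
    + exact/tauU/eta_tau/eta_gtr.
    + move=> z Az; case: (ltgtP z x) => [zx|xz|->]; [by left|by right; right|by right; left].
    + apply/seteqP; split => // z [[_ /= zx] [Vz|/= xz]].
      * by apply: nL; exists z; split => //; exact: VN.
      * by have := lt_trans zx xz; rewrite ltxx.
    + by left.
have [d2 d20 H2] : exists2 d2, 0 < d2 &
    forall y, x < y -> y < x + d2 -> component x y -> W y.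
  case: (pselect (exists b, x < b /\ N b)) => [[b [xb Nb]]|nR].
  - exists (b - x); first lra.
    move=> y xy yb _; apply: NW; apply: (connected_interval cN Nx Nb) => //; lra.
  - exists 1 => // y xy _ [A [cA Ax Ay]]; exfalso.
    apply: (@connected_separated A A [set z | x < z] (V `|` [set z | z < x]) y x) => //.
    + exact/eta_tau/eta_gtr.
    + exact/tauU/eta_tau/eta_ltr.
    + move=> z Az; case: (ltgtP z x) => [zx|xz|->]; [by right; right|by left|by right; left].
    + apply/seteqP; split => // z [[_ /= xz] [Vz|/= zx]].
      * by apply: nR; exists z; split => //; exact: VN.
      * by have := lt_trans zx xz; rewrite ltxx.
    + by left.
exists (Num.min d1 d2); first by rewrite lt_min d10 d20.
move=> y; rewrite lt_min !ltr_distl => /andP[/andP[? ?] /andP[? ?]] cy.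
by case: (ltgtP y x) => [yx|xy|->] //; [apply: H1|apply: H2] => //; lra.
Qed.

Lemma tau_component_ballP W : tau W <->
  forall x, W x -> exists2 d, 0 < d & forall y, `|y - x| < d -> component x y -> W y.
Proof.
split=> [tW x|H]; first exact: tau_component_ball.
apply: tau_local => x Wx; have [d d0 Hd] := H x Wx.
exists ([set y | `|y - x| < d] `&` component x); split.
- exact/tauI/component_open/eta_tau/eta_ball.
- by split; [rewrite /= subrr normr0|exact: component_refl].
- by move=> y [/= h1 h2]; exact: Hd.
Qed.

Definition component_interior x :=
  exists2 d, 0 < d & forall y, `|y - x| < d -> component x y.

Lemma GammaE : Gamma tau = ~` component_interior.
Proof.
apply/seteqP; split => x.
- move=> G [d d0 Hd]; apply: G => N; split.
  + by move=> [V [eV Vx VN]]; exists V; split => //; exact: eta_tau.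
  + move=> [V [tV Vx VN]]; have [d' d'0 Hd'] := tau_component_ball tV Vx.
    exists [set y | `|y - x| < Num.min d d']; split.
    * exact: eta_ball.
    * by rewrite /= subrr normr0 lt_min d0 d'0.
    * move=> y /=; rewrite lt_min => /andP[h1 h2]; apply: VN; apply: Hd' => //.
      exact: Hd.
- move=> nI H; apply: nI.
  have : nbhd_of tau x (component x).
    by exists (component x); split => //; [exact: component_open|exact: component_refl].
  move/H => [V [eV Vx VC]]; have [e e0 He] := (etaP V).1 eV x Vx.
  by exists e => // y /He /VC.
Qed.

Lemma eta_component_interior : eta component_interior.
Proof.
apply/etaP => x [d d0 Hd]; exists d => // y hy.
exists (d - `|y - x|); first lra.
move=> z hz; have := ler_distD y z x => h.
have cxz : component x z by apply: Hd; lra.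
exact: component_trans (component_sym (Hd y hy)) cxz.
Qed.

Lemma Gamma_closed : @closed R^o (Gamma tau).
Proof. by rewrite GammaE; apply: open_closedC; exact: eta_component_interior. Qed.

Lemma Gamma_component_extremum x : Gamma tau x ->
  (forall y, component x y -> x <= y) \/ (forall y, component x y -> y <= x).
Proof.
rewrite GammaE => nI; apply: contrapT => /not_orP [/existsNP [a /not_implyP [ca /negP]]].
rewrite -ltNge => ax /existsNP [b /not_implyP [cb /negP]]; rewrite -ltNge => xb.
apply: nI; exists (Num.min (x - a) (b - x)); first by rewrite lt_min !subr_gt0 ax xb.
move=> y; rewrite lt_min !ltr_distl => /andP[/andP[? ?] /andP[? ?]].
case: (ltgtP y x) => [yx|xy|->]; last exact: component_refl.
- by apply: (component_interval ca (component_refl x)) => //; lra.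
- by apply: (component_interval (component_refl x) cb) => //; lra.
Qed.

(* Each component contributes at most its two end points to Gamma. *)
Lemma countable_Gamma_sub (A : set R) (c : R -> nat) : A `<=` Gamma tau ->
  {in A &, forall x y, c x = c y -> component x y} -> countable A.
Proof.
move=> AG cP; apply/countable_injP.
exists (fun x => pickle (c x, `[< forall y, component x y -> x <= y >])).
move=> x y Ax Ay /(pcan_inj pickleK) [/(cP _ _ Ax Ay) cxy].
move: Ax Ay; rewrite !inE => /AG Gx /AG Gy.
have cyx := component_sym cxy.
case: (pselect (forall z, component x z -> x <= z)) => hx.
- rewrite asboolT // => /esym/asboolP hy.
  by apply/le_anti; rewrite hx // hy.
- rewrite asboolF // => /esym/asboolPn hy.
  case: (Gamma_component_extremum Gx) => // hx'.
  case: (Gamma_component_extremum Gy) => // hy'.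
  by apply/le_anti; rewrite hx' // hy'.
Qed.

Section Separable.
Variable D : set R.
Hypothesis D_countable : countable D.
Hypothesis D_dense : forall U, tau U -> U !=set0 -> U `&` D !=set0.

Definition dense_rep x := xget 0 (component x `&` D).

Lemma dense_repP x : component x (dense_rep x) /\ D (dense_rep x).
Proof.
have [y [cy Dy]] := D_dense (component_open x) (ex_intro _ x (component_refl x)).
by apply: (@xgetPex _ 0 (component x `&` D)); exists y.
Qed.

Definition D_code := projT1 (cid (elimT (countable_injP D) D_countable)).

Lemma D_code_inj : {in D &, injective D_code}.
Proof. exact: (projT2 (cid (elimT (countable_injP D) D_countable))). Qed.

Definition component_label x : nat := D_code (dense_rep x).

Lemma component_label_eq x y : component x y -> component_label x = component_label y.
Proof. by move=> /component_eq; rewrite /component_label /dense_rep => ->. Qed.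

Lemma eq_component_label x y : component_label x = component_label y -> component x y.
Proof.
move=> h; have [cx Dx] := dense_repP x; have [cy Dy] := dense_repP y.
have e : dense_rep x = dense_rep y by apply: D_code_inj => //; rewrite inE.
by apply: component_trans cx _; rewrite e; exact: component_sym.
Qed.

Lemma separable_Gamma_countable : countable (Gamma tau).
Proof.
apply: (@countable_Gamma_sub _ component_label) => // x y _ _.
exact: eq_component_label.
Qed.

(* The graph topology of the labelling separates components (labels are integers
   at distance >= 1) and is Euclidean inside each of them, as tau is. *)
Lemma tau_eq_graph_label : tau = tau_of (fun x => (component_label x)%:R).
Proof.
set F := fun x => _.
apply/seteqP; split => W.
- move=> tW.
  pose V : set (R^o * R^o)%type := [set p | exists2 e, 0 < e &
     forall y, `|y - p.1| < e -> `|F y - p.2| < e -> W y].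
  exists V; split.
  + rewrite openE => p [e e0 He]; apply/nbhs_ballP; exists (e / 2); first by rewrite /=; lra.
    move=> q [/= q1 q2]; exists (e / 2); first lra.
    move: q1 q2; rewrite -!ball_normE /= => q1 q2 y h1 h2; apply: He.
    * have := ler_distD q.1 y p.1; have := @distrC _ R q.1 p.1; lra.
    * have := ler_distD q.2 (F y) p.2; have := @distrC _ R q.2 p.2; lra.
  + apply/seteqP; split => x /=.
    * move=> Wx; have [d d0 Hd] := tau_component_ball tW Wx.
      exists (Num.min d 1); first by rewrite lt_min d0 ltr01.
      move=> y; rewrite !lt_min => /andP[h1 _] /andP[_ h2]; apply: Hd => //.
      by apply: eq_component_label; symmetry; exact: natr_dist_lt1 h2.
    * by move=> [e e0 He]; apply: He; rewrite subrr normr0.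
- move=> [V [oV ->]]; apply/tau_component_ballP => x /= Vx.
  move: oV; rewrite openE => /(_ _ Vx) /nbhs_ballP [e e0 He].
  exists e => // y hy cy; apply: He; split => /=; rewrite -ball_normE /=.
  + by rewrite distrC.
  + by rewrite /F (component_label_eq cy) subrr normr0.
Qed.

End Separable.

End Components.
Section IntervalCharts.
Variable R : realType.
Implicit Types (x y s t : R) (C : set R).

Definition shrink x : R := x / (1 + `|x|).
Definition unshrink s : R := s / (1 - `|s|).

Lemma shrink_bound x : -1 < shrink x < 1.
Proof.
rewrite /shrink; have h0 : 0 < 1 + `|x| by have := normr_ge0 x; lra.
rewrite ltr_pdivlMr // ltr_pdivrMr //.
by case: (lerP 0 x) => h; [rewrite (ger0_norm h)|rewrite (ltr0_norm h)]; apply/andP; split; lra.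
Qed.

Lemma shrink_homo : {homo shrink : x y / x < y}.
Proof.
move=> x y xy; rewrite -subr_gt0.
have hx : 0 < 1 + `|x| by have := normr_ge0 x; lra.
have hy : 0 < 1 + `|y| by have := normr_ge0 y; lra.
have -> : shrink y - shrink x = (y * (1 + `|x|) - x * (1 + `|y|)) / ((1 + `|x|) * (1 + `|y|)).
  by rewrite /shrink; field; rewrite !gt_eqF.
apply: divr_gt0; last exact: mulr_gt0.
by case: (lerP 0 x) => h1; [rewrite (ger0_norm h1)|rewrite (ltr0_norm h1)];
   case: (lerP 0 y) => h2; [rewrite (ger0_norm h2)|rewrite (ltr0_norm h2)|
                             rewrite (ger0_norm h2)|rewrite (ltr0_norm h2)]; nra.
Qed.

Lemma shrink_le : {mono shrink : x y / x <= y}.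
Proof. exact: le_mono shrink_homo. Qed.

Lemma shrink_lt : {mono shrink : x y / x < y}.
Proof. exact: leW_mono shrink_le. Qed.

Lemma shrinkK : cancel shrink unshrink.
Proof.
move=> x; have hx : 0 < 1 + `|x| by have := normr_ge0 x; lra.
rewrite /unshrink.
have -> : `|shrink x| = `|x| / (1 + `|x|) by rewrite /shrink normrM normfV (gtr0_norm hx).
by rewrite /shrink; field; rewrite gt_eqF // addrK oner_neq0.
Qed.

Lemma unshrinkK s : -1 < s < 1 -> shrink (unshrink s) = s.
Proof.
move=> /andP[h1 h2].
have hs : 0 < 1 - `|s| by case: (lerP 0 s) => h; [rewrite (ger0_norm h)|rewrite (ltr0_norm h)]; lra.
rewrite /shrink.
have -> : `|unshrink s| = `|s| / (1 - `|s|) by rewrite /unshrink normrM normfV (gtr0_norm hs).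
by rewrite /unshrink; field; rewrite gt_eqF // subrK oner_neq0.
Qed.

Definition nondegenerate C := exists y z, [/\ C y, C z & y < z].
Definition has_min C := exists2 m, C m & forall y, C y -> m <= y.
Definition has_max C := exists2 m, C m & forall y, C y -> y <= m.

Definition shrink_inf C := inf (shrink @` C).
Definition shrink_sup C := sup (shrink @` C).

Section Chart.
Variable C : set R.
Hypothesis C_itv : is_interval C.
Hypothesis C_nd : nondegenerate C.

Let shrinkC_neq0 : shrink @` C !=set0.
Proof. by case: C_nd => y [z [Cy _ _]]; exists (shrink y), y. Qed.

Let shrinkC_sup : has_sup (shrink @` C).
Proof.
split => //; exists 1 => _ [y _ <-].
by have /andP[_ /ltW] := shrink_bound y.
Qed.

Let shrinkC_inf : has_inf (shrink @` C).
Proof.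
split => //; exists (-1) => _ [y _ <-].
by have /andP[/ltW ? _] := shrink_bound y.
Qed.

Lemma shrink_inf_le y : C y -> shrink_inf C <= shrink y.
Proof. by move=> Cy; apply: (ge_inf shrinkC_inf.2); exists y. Qed.

Lemma le_shrink_sup y : C y -> shrink y <= shrink_sup C.
Proof. by move=> Cy; apply: (sup_upper_bound shrinkC_sup); exists y. Qed.

Lemma shrink_inf_ge : -1 <= shrink_inf C.
Proof.
apply: lb_le_inf => // _ [y _ <-].
by have /andP[/ltW ? _] := shrink_bound y.
Qed.

Lemma shrink_sup_le : shrink_sup C <= 1.
Proof.
apply: ge_sup => // _ [y _ <-].
by have /andP[_ /ltW] := shrink_bound y.
Qed.

Lemma shrink_inf_lt_sup : shrink_inf C < shrink_sup C.
Proof.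
case: C_nd => y [z [Cy Cz yz]].
by apply: le_lt_trans (shrink_inf_le Cy) (lt_le_trans _ (le_shrink_sup Cz)); rewrite shrink_lt.
Qed.

Lemma unshrink_mem s : shrink_inf C < s -> s < shrink_sup C -> C (unshrink s).
Proof.
move=> h1 h2.
have [_ [c1 Cc1 <-] e1] := inf_adherent (eps := s - shrink_inf C) ltac:(lra) shrinkC_inf.
have [_ [c2 Cc2 <-] e2] := sup_adherent (eps := shrink_sup C - s) ltac:(lra) shrinkC_sup.
have hs : -1 < s < 1 by have := shrink_inf_ge; have := shrink_sup_le; move=> ? ?; apply/andP; split; lra.
move: e1 e2; rewrite -/(shrink_inf C) -/(shrink_sup C) => e1 e2.
by apply: (C_itv Cc1 Cc2); rewrite -shrink_lt unshrinkK //; lra.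
Qed.

Lemma shrink_inf_min m : C m -> shrink m = shrink_inf C -> forall y, C y -> m <= y.
Proof. by move=> Cm e y Cy; rewrite -shrink_le e; exact: shrink_inf_le. Qed.

Lemma min_shrink_inf m : C m -> (forall y, C y -> m <= y) -> shrink m = shrink_inf C.
Proof.
move=> Cm H; apply/le_anti/andP; split; last exact: shrink_inf_le.
by apply: lb_le_inf => // _ [y Cy <-]; rewrite shrink_le; exact: H.
Qed.

Lemma shrink_sup_max m : C m -> shrink m = shrink_sup C -> forall y, C y -> y <= m.
Proof. by move=> Cm e y Cy; rewrite -shrink_le e; exact: le_shrink_sup. Qed.

Lemma max_shrink_sup m : C m -> (forall y, C y -> y <= m) -> shrink m = shrink_sup C.
Proof.
move=> Cm H; apply/le_anti/andP; split; first exact: le_shrink_sup.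
by apply: ge_sup => // _ [y Cy <-]; rewrite shrink_le; exact: H.
Qed.

End Chart.

(* Affine in the [shrink] chart, [transport C C'] maps the interval [C] onto
   [C'] increasingly; it needs the two intervals to have the same end types. *)
Definition transport C C' x :=
  unshrink (shrink_inf C' + (shrink x - shrink_inf C) / (shrink_sup C - shrink_inf C)
                             * (shrink_sup C' - shrink_inf C')).

Section Transport.
Variables C C' : set R.
Hypothesis C_nd : nondegenerate C.
Hypotheses (C'_itv : is_interval C') (C'_nd : nondegenerate C').
Hypothesis min_iff : has_min C <-> has_min C'.
Hypothesis max_iff : has_max C <-> has_max C'.

Let ratio x := (shrink x - shrink_inf C) / (shrink_sup C - shrink_inf C).
Let image x := shrink_inf C' + ratio x * (shrink_sup C' - shrink_inf C').

Let transport_image x : C x -> -1 < image x < 1 /\ C' (unshrink (image x)).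
Proof.
move=> Cx; have d0 := shrink_inf_lt_sup C_nd; have d0' := shrink_inf_lt_sup C'_nd.
have l1 := shrink_inf_ge C'_nd; have h1 := shrink_sup_le C'_nd.
case: (eqVneq (shrink x) (shrink_inf C)) => [el|nel].
  have [m Cm mm] : has_min C'.
    by apply/min_iff; exists x => // y Cy; exact: (shrink_inf_min C_nd Cx el Cy).
  have -> : image x = shrink m.
    by rewrite (min_shrink_inf C'_nd Cm mm) /image /ratio el subrr !mul0r addr0.
  by rewrite shrinkK; split => //; exact: shrink_bound.
case: (eqVneq (shrink x) (shrink_sup C)) => [eh|neh].
  have [m Cm mm] : has_max C'.
    by apply/max_iff; exists x => // y Cy; exact: (shrink_sup_max C_nd Cx eh Cy).
  have -> : image x = shrink m.
    rewrite (max_shrink_sup C'_nd Cm mm) /image /ratio eh divff; last by rewrite gt_eqF // subr_gt0.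
    by rewrite mul1r addrC subrK.
  by rewrite shrinkK; split => //; exact: shrink_bound.
have lx : shrink_inf C < shrink x by rewrite lt_neqAle eq_sym nel (shrink_inf_le C_nd Cx).
have xh : shrink x < shrink_sup C by rewrite lt_neqAle neh (le_shrink_sup C_nd Cx).
have t0 : 0 < ratio x by apply: divr_gt0; lra.
have t1 : ratio x < 1 by rewrite /ratio ltr_pdivrMr ?mul1r; lra.
have p1 : 0 < ratio x * (shrink_sup C' - shrink_inf C') by apply: mulr_gt0; lra.
have p2 : ratio x * (shrink_sup C' - shrink_inf C') < shrink_sup C' - shrink_inf C'.
  by rewrite -[X in _ < X]mul1r ltr_pM2r //; lra.
split; first by apply/andP; split; rewrite /image; lra.
by apply: (unshrink_mem C'_itv C'_nd); rewrite /image; lra.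
Qed.

Lemma transport_mem x : C x -> C' (transport C C' x).
Proof. by move=> /transport_image []. Qed.

Lemma shrink_transport x : C x -> shrink (transport C C' x) = image x.
Proof. by move=> /transport_image [h _]; rewrite /transport unshrinkK. Qed.

Lemma transport_lt x y : C x -> C y -> x < y -> transport C C' x < transport C C' y.
Proof.
move=> Cx Cy xy; rewrite -shrink_lt !shrink_transport //.
have d0 := shrink_inf_lt_sup C_nd; have d0' := shrink_inf_lt_sup C'_nd.
have : ratio x < ratio y.
  by rewrite /ratio ltr_pM2r ?invr_gt0 ?subr_gt0 // ltrBlDr subrK shrink_lt.
by rewrite /image ltrD2l => h; rewrite ltr_pM2r // subr_gt0.
Qed.

Lemma transportK x : C x -> transport C' C (transport C C' x) = x.
Proof.
move=> Cx; rewrite {1}/transport shrink_transport //.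
have d0 := shrink_inf_lt_sup C_nd; have d0' := shrink_inf_lt_sup C'_nd.
rewrite -[RHS]shrinkK /image /ratio; congr unshrink; field.
by rewrite !gt_eqF // subr_gt0.
Qed.

End Transport.

Lemma increasing_onto_continuous (C C' : set R) (f : R -> R) : is_interval C' ->
  (forall x y, C x -> C y -> x < y -> f x < f y) ->
  (forall x, C x -> C' (f x)) ->
  (forall z, C' z -> exists x, C x /\ f x = z) ->
  forall x e, C x -> 0 < e ->
  exists2 d, 0 < d & forall y, C y -> `|y - x| < d -> `|f y - f x| < e.
Proof.
move=> C'_itv mono into onto x e Cx e0.
have [d1 d10 H1] : exists2 d1, 0 < d1 &
    forall y, C y -> x < y -> y < x + d1 -> f y < f x + e.
  case: (pselect (exists y0, C y0 /\ x < y0)) => [[y0 [Cy0 xy0]]|nR]; last first.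
    by exists 1 => // y Cy xy; exfalso; apply: nR; exists y.
  case: (ltP (f y0) (f x + e)) => h.
    exists (y0 - x); first lra.
    by move=> y Cy xy yy0; have := mono _ _ Cy Cy0 ltac:(lra); lra.
  have fx0 := mono _ _ Cx Cy0 xy0.
  have Cw : C' (f x + e / 2) by apply: (C'_itv _ _ _ (into _ Cx) (into _ Cy0)); lra.
  have [x' [Cx' fx']] := onto _ Cw.
  have xx' : x < x'.
    rewrite ltNge; apply/negP; rewrite le_eqVlt => /orP[/eqP ex|lt].
    * by move: fx'; rewrite ex; lra.
    * by have := mono _ _ Cx' Cx lt; lra.
  exists (x' - x); first lra.
  by move=> y Cy xy yx'; have := mono _ _ Cy Cx' ltac:(lra); lra.
have [d2 d20 H2] : exists2 d2, 0 < d2 &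
    forall y, C y -> y < x -> x - d2 < y -> f x - e < f y.
  case: (pselect (exists y0, C y0 /\ y0 < x)) => [[y0 [Cy0 y0x]]|nL]; last first.
    by exists 1 => // y Cy yx; exfalso; apply: nL; exists y.
  case: (ltP (f x - e) (f y0)) => h.
    exists (x - y0); first lra.
    by move=> y Cy yx y0y; have := mono _ _ Cy0 Cy ltac:(lra); lra.
  have fx0 := mono _ _ Cy0 Cx y0x.
  have Cw : C' (f x - e / 2) by apply: (C'_itv _ _ _ (into _ Cy0) (into _ Cx)); lra.
  have [x' [Cx' fx']] := onto _ Cw.
  have xx' : x' < x.
    rewrite ltNge; apply/negP; rewrite le_eqVlt => /orP[/eqP ex|lt].
    * by move: fx'; rewrite ex; lra.
    * by have := mono _ _ Cx Cx' lt; lra.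
  exists (x - x'); first lra.
  by move=> y Cy yx x'y; have := mono _ _ Cx' Cy ltac:(lra); lra.
exists (Num.min d1 d2); first by rewrite lt_min d10 d20.
move=> y Cy; rewrite lt_min !ltr_distl => /andP[/andP[? ?] /andP[? ?]].
case: (ltgtP y x) => [yx|xy|->]; last by apply/andP; split; lra.
- by have := mono _ _ Cy Cx yx; have := H2 _ Cy yx ltac:(lra); move=> ? ?; apply/andP; split; lra.
- by have := mono _ _ Cx Cy xy; have := H1 _ Cy xy ltac:(lra); move=> ? ?; apply/andP; split; lra.
Qed.

End IntervalCharts.
Local Open Scope card_scope.

Lemma countableU T (A B : set T) : countable A -> countable B -> countable (A `|` B).
Proof.
move=> cA cB.
have -> : A `|` B = \bigcup_(b in [set: bool]) (if b then A else B).
  apply/seteqP; split => x.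
  - by case=> h; [exists true|exists false].
  - by case=> -[] _ h; [left|right].
by apply: bigcup_countable => // -[].
Qed.

Lemma uncountable_neq0 T (A : set T) : ~ countable A -> A !=set0.
Proof. by move=> nA; apply/set0P/eqP => A0; apply: nA; rewrite A0. Qed.

Lemma uncountable_sub T (A B : set T) : ~ countable A -> A `<=` B -> ~ countable B.
Proof. by move=> nA AB cB; apply/nA/(sub_countable _ cB)/subset_card_le. Qed.

Lemma uncountableD1 T (A : set T) p : ~ countable A -> ~ countable (A `\ p).
Proof.
move=> nA cA; apply/nA/(sub_countable _ (countableU cA (countable1 p)))/subset_card_le.
by move=> x Ax; have [->|xp] := pselect (x = p); [right|left].
Qed.

Lemma countable_range (T : pointedType) (A : set T) :
  countable A -> exists e : nat -> T, A `<=` range e.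
Proof. by move=> /pcard_surjP [e eA]; exists e. Qed.

Section CantorScheme.
Variable R : realType.

Definition segment (I : R * R) := [set y | I.1 <= y <= I.2].

(* The points of [T] having a rational neighbourhood that meets [T] countably
   form a countable union of countable sets. *)
Lemma uncountable_condensation (T : set R) : ~ countable T ->
  ~ countable [set p | T p /\ forall r, 0 < r -> ~ countable (T `&` segment (p - r, p + r))].
Proof.
move=> nT; set K := [set p | _].
pose ooI (q : rat * rat) := [set y : R | ratr q.1 < y < ratr q.2].
pose NC := [set x | exists q, ooI q x /\ countable (T `&` ooI q)].
have cTNC : countable (T `&` NC).
  apply: sub_countable (bigcup_countable (D := [set q | countable (T `&` ooI q)])
    (F := fun q => T `&` ooI q) (countableP _) (fun q h => h)).
  by apply: subset_card_le => x [Tx [q [oq cq]]]; exists q.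
apply: (@uncountable_sub _ (T `\` NC)) => [cK|p [Tp nNC]].
  apply/nT/(sub_countable _ (countableU cK cTNC))/subset_card_le.
  by move=> x Tx; case: (pselect (NC x)) => h; [right|left].
split => // r r0.
have [q1] : exists q1, ratr q1 \in `](p - r), p[ by apply: rat_in_itvoo; lra.
rewrite in_itv /= => /andP[q1a q1b].
have [q2] : exists q2, ratr q2 \in `]p, (p + r)[ by apply: rat_in_itvoo; lra.
rewrite in_itv /= => /andP[q2a q2b].
have nc : ~ countable (T `&` ooI (q1, q2)).
  by move=> c; apply: nNC; exists (q1, q2); split => //=; apply/andP; split.
apply: (uncountable_sub nc) => y [Ty /andP[/= y1 y2]]; split => //.
by apply/andP; split => /=; lra.
Qed.

(* Three distinct condensation points of [T]: small segments around them are
   disjoint and at most one of them contains [e]. *)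
Lemma uncountable_split (T : set R) (eps e : R) : ~ countable T -> 0 < eps ->
  exists J : (R * R) * (R * R), [/\ J.1.2 - J.1.1 <= eps, J.2.2 - J.2.1 <= eps,
    ~ countable (T `&` segment J.1) /\ ~ countable (T `&` segment J.2),
    (forall y, segment J.1 y -> segment J.2 y -> False) &
    ~ segment J.1 e /\ ~ segment J.2 e].
Proof.
move=> nT eps0; have := uncountable_condensation nT; set K := [set p | _] => nK.
have cond p r : K p -> 0 < r -> ~ countable (T `&` segment (p - r, p + r)).
  by move=> [_]; apply.
have [p1 K1] := uncountable_neq0 nK.
have nK1 := @uncountableD1 _ _ p1 nK.
have [p2 [K2 /= n21]] := uncountable_neq0 nK1.
have nK2 := @uncountableD1 _ _ p2 nK1.
have [p3 [[K3 /= n31] /= n32]] := uncountable_neq0 nK2.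
have dpos (a b : R) : ~ a = b -> 0 < `|a - b| by move=> ab; rewrite normr_gt0 subr_eq0; apply/eqP.
have d12 := dpos _ _ (nesym n21); have d13 := dpos _ _ (nesym n31).
have d23 := dpos _ _ (nesym n32).
pose r := Num.min (eps / 2) (Num.min (`|p1 - p2| / 3) (Num.min (`|p1 - p3| / 3) (`|p2 - p3| / 3))).
have r0 : 0 < r by rewrite !lt_min; apply/and4P; split; lra.
have := lexx r; rewrite {2}/r !le_min => /and4P[re r12 r13 r23].
have disj (a b : R) : 3 * r <= `|a - b| ->
    forall y, segment (a - r, a + r) y -> segment (b - r, b + r) y -> False.
  move=> h y /andP[/= ? ?] /andP[/= ? ?].
  have h1 : `|a - y| <= r by rewrite ler_distl; apply/andP; split; lra.
  have h2 : `|y - b| <= r by rewrite ler_distl; apply/andP; split; lra.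
  have := ler_distD y a b; lra.
have D12 : 3 * r <= `|p1 - p2| by lra.
have D13 : 3 * r <= `|p1 - p3| by lra.
have D23 : 3 * r <= `|p2 - p3| by lra.
have L (a : R) : (a + r) - (a - r) <= eps by lra.
case: (pselect (segment (p1 - r, p1 + r) e)) => e1.
  exists ((p2 - r, p2 + r), (p3 - r, p3 + r)); split => //=.
  - by split; apply: cond.
  - exact: disj D23.
  - by split => h; [exact: disj D12 _ e1 h|exact: disj D13 _ e1 h].
case: (pselect (segment (p2 - r, p2 + r) e)) => e2.
  exists ((p1 - r, p1 + r), (p3 - r, p3 + r)); split => //=.
  - by split; apply: cond.
  - exact: disj D13.
  - by split => // h; exact: disj D23 _ e2 h.
exists ((p1 - r, p1 + r), (p2 - r, p2 + r)); split => //=.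
- by split; apply: cond.
- exact: disj D12.
Qed.

Definition seg_meet (I J : R * R) : R * R := (Num.max I.1 J.1, Num.min I.2 J.2).

Lemma segment_meet I J : segment (seg_meet I J) = segment I `&` segment J.
Proof.
apply/seteqP; split => y; rewrite /segment /= ge_max le_min.
- by case/andP => /andP[-> ->] /andP[-> ->].
- by case => /andP[-> ->] /andP[-> ->].
Qed.

(* The Dedekind cut of [x] in the rationals, enumerated by [unpickle]. *)
Definition rat_cut (x : R) : nat -> bool :=
  fun n => `[< ratr (odflt (0 : rat) (unpickle n)) < x >].

Lemma rat_cut_inj : injective rat_cut.
Proof.
have key x y : x < y -> rat_cut x <> rat_cut y.
  move=> xy e; have [q] := rat_in_itvoo xy; rewrite in_itv /= => /andP[h1 h2].
  have := congr1 (fun f => f (pickle q)) e; rewrite /rat_cut /= pickleK /=.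
  case: (asboolP (ratr q < x)) => hx; first by lra.
  by case: (asboolP (ratr q < y)).
move=> x y e; case: (ltgtP x y) => // h; exfalso.
- exact: (key _ _ h e).
- exact: (key _ _ h (esym e)).
Qed.

Lemma card_R_le_bits : [set: R] #<= [set: nat -> bool].
Proof.
apply/pcard_leP/injfunPex; exists rat_cut => //.
by move=> x y _ _; exact: rat_cut_inj.
Qed.

End CantorScheme.

Section DegeneratePoints.
Variable R : realType.
Local Notation eta := (@Defs.eta R).
Variable tau : set (set R).
Hypothesis tau_top : is_topology tau.
Hypothesis eta_tau : eta `<=` tau.
Hypothesis tau_lc : locally_connected_top tau.

Local Notation component := (component tau).

Definition degenerate_pts := [set x | forall y, component x y -> y = x].

Lemma component_rat x : ~ degenerate_pts x -> exists q : rat, component x (ratr q).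
Proof.
move=> /existsNP [y /not_implyP [cxy nyx]].
case: (ltgtP y x) => [yx|xy|e] //.
- have [q] := rat_in_itvoo yx; rewrite in_itv /= => /andP[h1 h2].
  by exists q; exact: (component_interval eta_tau cxy (component_refl tau x) h1 h2).
- have [q] := rat_in_itvoo xy; rewrite in_itv /= => /andP[h1 h2].
  by exists q; exact: (component_interval eta_tau (component_refl tau x) cxy h1 h2).
Qed.

Lemma nondegenerate_componentP x :
  nondegenerate (component x) <-> ~ degenerate_pts x.
Proof.
split=> [[y [z [cy cz yz]]] S|/existsNP [y /not_implyP [cxy nyx]]].
  by move: yz; rewrite (S _ cy) (S _ cz) ltxx.
case: (ltgtP y x) => [yx|xy|e] //.
- by exists y, x; split => //; exact: component_refl.
- by exists x, y; split => //; exact: component_refl.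
Qed.

Definition rat_label x := pickle (xget (0 : rat) [set q : rat | component x (ratr q)]).

Lemma Gamma_nondegenerate_countable : countable (Gamma tau `\` degenerate_pts).
Proof.
apply: (@countable_Gamma_sub _ _ tau_top eta_tau tau_lc _ rat_label) => [x []//|x y].
rewrite !inE => -[_ nx] [_ ny] /(pcan_inj pickleK) e.
have hx := xgetPex 0 (component_rat nx); have hy := xgetPex 0 (component_rat ny).
by rewrite /= e in hx; exact: component_trans hx (component_sym hy).
Qed.

Section Uncountable.
Hypothesis degenerate_uncountable : ~ countable degenerate_pts.

Lemma uncountable_degenerate_segment :
  exists k : nat, ~ countable (degenerate_pts `&` segment (- k%:R, k%:R)).
Proof.
apply: contrapT => /forallNP H; apply: degenerate_uncountable.
have : countable (\bigcup_(k in [set: nat]) (degenerate_pts `&` segment (- k%:R, k%:R))).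
  by apply: bigcup_countable => // k _; apply: contrapT; exact: H.
apply: sub_countable; apply: subset_card_le => x Sx.
exists (Num.Def.archi_bound `|x|) => //; split => //; rewrite /segment /=.
by rewrite -ler_norml; apply: ltW; apply: archi_boundP.
Qed.

Definition root_seg : R * R :=
  let k := projT1 (cid uncountable_degenerate_segment) in (- k%:R, k%:R).

Lemma root_seg_uncountable : ~ countable (degenerate_pts `&` segment root_seg).
Proof. exact: projT2 (cid uncountable_degenerate_segment). Qed.

(* The Cantor scheme must avoid the countably many non-degenerate points of
   Gamma; [avoid n] is the one dodged at stage [n]. *)
Definition avoid : nat -> R := projT1 (cid (countable_range Gamma_nondegenerate_countable)).

Lemma avoid_surj : Gamma tau `\` degenerate_pts `<=` range avoid.
Proof. exact: projT2 (cid (countable_range Gamma_nondegenerate_countable)). Qed.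

Definition mesh (n : nat) : R := (n.+1%:R)^-1.

Lemma mesh_gt0 n : 0 < mesh n.
Proof. by rewrite invr_gt0 ltr0n. Qed.

Definition split_seg n (I : R * R) : (R * R) * (R * R) :=
  match pselect (~ countable (degenerate_pts `&` segment I)) with
  | left P => projT1 (cid (uncountable_split (avoid n) P (mesh_gt0 n)))
  | right _ => (I, I)
  end.

Lemma split_segP n I : ~ countable (degenerate_pts `&` segment I) ->
  let J := split_seg n I in
  [/\ J.1.2 - J.1.1 <= mesh n, J.2.2 - J.2.1 <= mesh n,
    ~ countable ((degenerate_pts `&` segment I) `&` segment J.1) /\
    ~ countable ((degenerate_pts `&` segment I) `&` segment J.2),
    (forall y, segment J.1 y -> segment J.2 y -> False) &
    ~ segment J.1 (avoid n) /\ ~ segment J.2 (avoid n)].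
Proof.
move=> P0; rewrite /split_seg; case: pselect => [P|//].
exact: (projT2 (cid (uncountable_split (avoid n) P (mesh_gt0 n)))).
Qed.

Fixpoint cantor_seg (b : nat -> bool) (n : nat) : R * R :=
  if n is m.+1 then
    seg_meet (cantor_seg b m) ((if b m then snd else fst) (split_seg m (cantor_seg b m)))
  else root_seg.

Lemma cantor_seg_uncountable b n : ~ countable (degenerate_pts `&` segment (cantor_seg b n)).
Proof.
elim: n => [|n IH] /=; first exact: root_seg_uncountable.
have [_ _ [u1 u2] _ _] := split_segP n IH.
by rewrite segment_meet setIA; case: (b n).
Qed.

Lemma cantor_seg_decr b m n : (m <= n)%N -> segment (cantor_seg b n) `<=` segment (cantor_seg b m).
Proof.
elim: n => [|n IH]; first by rewrite leqn0 => /eqP ->.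
rewrite leq_eqVlt => /orP[/eqP -> //|]; rewrite ltnS => /IH h z.
by rewrite /= segment_meet => -[/h].
Qed.

Lemma cantor_seg_small b n y z :
  segment (cantor_seg b n.+1) y -> segment (cantor_seg b n.+1) z -> `|y - z| <= mesh n.
Proof.
have [l1 l2 _ _ _] := split_segP n (@cantor_seg_uncountable b n).
rewrite /= segment_meet => -[_ hy] [_ hz].
by move: hy hz l1 l2; case: (b n) => /= /andP[y1 y2] /andP[z1 z2] l1 l2;
  rewrite ler_distl; apply/andP; split; lra.
Qed.

Lemma cantor_seg_avoid b n : ~ segment (cantor_seg b n.+1) (avoid n).
Proof.
have [_ _ _ _ [a1 a2]] := split_segP n (@cantor_seg_uncountable b n).
by rewrite /= segment_meet => -[_]; case: (b n).
Qed.

Lemma cantor_seg_disj b b' n : cantor_seg b n = cantor_seg b' n -> b n != b' n ->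
  forall z, segment (cantor_seg b n.+1) z -> segment (cantor_seg b' n.+1) z -> False.
Proof.
move=> e ne z; rewrite /= !segment_meet e => -[_ h1] [_ h2].
have [_ _ _ D _] := split_segP n (@cantor_seg_uncountable b' n).
by move: ne h1 h2; case: (b n); case: (b' n) => //= _ h1 h2; [exact: D h2 h1|exact: D h1 h2].
Qed.

Lemma cantor_seg_le b n : (cantor_seg b n).1 <= (cantor_seg b n).2.
Proof.
have [z [_ /andP[h1 h2]]] := uncountable_neq0 (@cantor_seg_uncountable b n).
exact: le_trans h1 h2.
Qed.

Definition cantor_pt b := sup [set (cantor_seg b n).1 | n in [set: nat]].

Lemma cantor_pt_in b n : segment (cantor_seg b n) (cantor_pt b).
Proof.
have L m : segment (cantor_seg b m) (cantor_seg b m).1.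
  by rewrite /segment /= lexx cantor_seg_le.
have ub m k : (cantor_seg b m).1 <= (cantor_seg b k).2.
  have /andP[a _] := cantor_seg_decr (leq_maxl m k) (L (maxn m k)).
  have /andP[_ c] := cantor_seg_decr (leq_maxr m k) (L (maxn m k)).
  exact: le_trans a c.
have hs : has_sup [set (cantor_seg b n).1 | n in [set: nat]].
  split; first by exists (cantor_seg b 0).1, 0%N.
  by exists (cantor_seg b 0).2 => _ [m _ <-]; exact: ub.
apply/andP; split.
- by apply: (sup_upper_bound hs); exists n.
- by apply: ge_sup; [case: hs|move=> _ [m _ <-]; exact: ub].
Qed.

(* An interior point of its component would share it with the degenerate points
   of small Cantor segments; a non-interior one is avoided by construction. *)
Lemma cantor_pt_degenerate b : degenerate_pts (cantor_pt b).
Proof.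
apply: contrapT => nSp.
case: (pselect (component_interior tau (cantor_pt b))) => [[d d0 Hd]|nI].
- pose n := Num.Def.archi_bound d^-1.
  have hn : mesh n < d.
    have dpos : 0 <= d^-1 by rewrite invr_ge0 ltW.
    have := archi_boundP dpos; rewrite -/n => h.
    rewrite /mesh -[d]invrK ltf_pV2 ?posrE ?invr_gt0 ?ltr0n //.
    by apply: lt_trans h _; rewrite ltr_nat.
  have [s [Ss hs]] := uncountable_neq0 (@cantor_seg_uncountable b n.+1).
  have cs : component (cantor_pt b) s.
    apply: Hd; have := cantor_seg_small hs (cantor_pt_in b n.+1).
    by rewrite distrC; lra.
  apply: nSp => y cy; have e := Ss _ (component_sym cs).
  by rewrite e in cy *; apply: Ss.
- have [n _ en] : range avoid (cantor_pt b).
    by apply: avoid_surj; split => //; rewrite (GammaE tau_top eta_tau tau_lc).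
  by apply: (@cantor_seg_avoid b n); rewrite en; exact: cantor_pt_in.
Qed.

Lemma cantor_pt_inj : injective cantor_pt.
Proof.
move=> b b' e; apply: contrapT => ne.
have ex : exists i, b i != b' i.
  apply: contrapT => /forallNP h; apply: ne; apply/funext => i.
  by apply/eqP; apply: contrapT => /negP; exact: h.
case: (ex_minnP ex) => m hm minm.
have agree k : (k <= m)%N -> cantor_seg b k = cantor_seg b' k.
  elim: k => [//|k IH] km /=; rewrite IH ?(ltnW km) //.
  suff -> : b k = b' k by [].
  by apply/eqP; apply: contraTT km => /minm; rewrite -leqNgt.
apply: (cantor_seg_disj (agree m (leqnn m)) hm (cantor_pt_in b m.+1)).
by rewrite e; exact: cantor_pt_in.
Qed.

Lemma card_degenerate_pts : degenerate_pts #= [set: R].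
Proof.
apply: Cantor_Bernstein; first exact: subset_card_le.
apply: card_le_trans (card_R_le_bits R) _.
apply/pcard_leP/injfunPex; exists cantor_pt.
- by move=> b _; exact: cantor_pt_degenerate.
- by move=> b b' _ _; exact: cantor_pt_inj.
Qed.

End Uncountable.

End DegeneratePoints.

Definition end_type (R : realType) (C : set R) := (`[< has_min C >], `[< has_max C >]).

Lemma end_type_iff (R : realType) (C C' : set R) : end_type C = end_type C' ->
  (has_min C <-> has_min C') /\ (has_max C <-> has_max C').
Proof. by case=> e1 e2; split; apply: asbool_eq_equiv. Qed.

Definition glue (R : realType) (tau : set (set R)) (pi : set R -> set R) (sg : R -> R) x :=
  if `[< degenerate_pts tau x >] then sg x
  else transport (component tau x) (pi (component tau x)) x.

Section GlueE.
Variables (R : realType) (tau : set (set R)) (pi : set R -> set R) (sg : R -> R).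

Lemma glue_degenerate x : degenerate_pts tau x -> glue tau pi sg x = sg x.
Proof. by move=> S; rewrite /glue asboolT. Qed.

Lemma glue_nondegenerate x : ~ degenerate_pts tau x ->
  glue tau pi sg x = transport (component tau x) (pi (component tau x)) x.
Proof. by move=> S; rewrite /glue asboolF. Qed.

End GlueE.

Section Glue.
Variable R : realType.
Local Notation eta := (@Defs.eta R).
Variables tau1 tau2 : set (set R).
Hypotheses (tau1_top : is_topology tau1) (eta_tau1 : eta `<=` tau1).
Hypothesis tau1_lc : locally_connected_top tau1.
Hypotheses (tau2_top : is_topology tau2) (eta_tau2 : eta `<=` tau2).
Hypothesis tau2_lc : locally_connected_top tau2.

Variables (pi : set R -> set R) (sg : R -> R).
Hypothesis pi_component : forall x, ~ degenerate_pts tau1 x ->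
  exists y, [/\ ~ degenerate_pts tau2 y, pi (component tau1 x) = component tau2 y &
                end_type (component tau2 y) = end_type (component tau1 x)].
Hypothesis sg_degenerate : forall x, degenerate_pts tau1 x -> degenerate_pts tau2 (sg x).

Local Notation h := (glue tau1 pi sg).

Lemma glue_component x : ~ degenerate_pts tau1 x ->
  component tau2 (h x) = pi (component tau1 x) /\ ~ degenerate_pts tau2 (h x).
Proof.
move=> nS; have [y [nSy ey ty]] := pi_component nS.
have [tm tM] := end_type_iff (esym ty).
have C_nd : nondegenerate (component tau1 x) by exact/nondegenerate_componentP.
have C'_nd : nondegenerate (component tau2 y) by exact/nondegenerate_componentP.
have mem : component tau2 y (h x).
  rewrite glue_nondegenerate // ey.
  apply: (transport_mem C_nd (@component_interval _ _ eta_tau2 y) C'_nd tm tM).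
  exact: component_refl.
have ec : component tau2 (h x) = pi (component tau1 x) by rewrite ey; exact/esym/component_eq.
by split => //; apply/nondegenerate_componentP; rewrite ec ey.
Qed.

Lemma glue_cancel pii sgi :
  (forall x, ~ degenerate_pts tau1 x -> pii (pi (component tau1 x)) = component tau1 x) ->
  (forall x, degenerate_pts tau1 x -> sgi (sg x) = x) ->
  cancel h (glue tau2 pii sgi).
Proof.
move=> piK sgK x; case: (pselect (degenerate_pts tau1 x)) => S.
  by rewrite glue_degenerate // glue_degenerate ?sgK //; exact: sg_degenerate.
have [ec nS2] := glue_component S.
have [y [nSy ey ty]] := pi_component S.
have [tm tM] := end_type_iff (esym ty).
rewrite (glue_nondegenerate _ _ nS2) ec piK // glue_nondegenerate // ey.
apply: transportK => //; try exact: component_interval; try exact: component_refl.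
- exact/nondegenerate_componentP.
- exact/nondegenerate_componentP.
Qed.

(* On a non-degenerate component [h] is an increasing bijection onto another
   one, hence Euclidean-continuous there, and tau1, tau2 are Euclidean inside
   components. *)
Lemma glue_continuous U : tau2 U -> tau1 (h @^-1` U).
Proof.
move=> tU; apply/(tau_component_ballP tau1_top eta_tau1 tau1_lc) => x /= Ux.
have [e e0 He] := tau_component_ball tau2_top eta_tau2 tau2_lc tU Ux.
case: (pselect (degenerate_pts tau1 x)) => S.
  by exists 1 => // y _ cy; rewrite (S _ cy).
have [ec nS2] := glue_component S.
have [y0 [nSy ey ty]] := pi_component S.
have [tm tM] := end_type_iff (esym ty).
rewrite ey in ec tm tM; move: (glue_nondegenerate pi sg S); rewrite ey => hx.
have C'_itv := @component_interval _ _ eta_tau2 y0.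
have C_itv := @component_interval _ _ eta_tau1 x.
have C_nd : nondegenerate (component tau1 x) by exact/nondegenerate_componentP.
have C'_nd : nondegenerate (component tau2 y0) by exact/nondegenerate_componentP.
have [d d0 Hd] := increasing_onto_continuous
  (f := transport (component tau1 x) (component tau2 y0)) C'_itv
  (fun a b Ca Cb ab => transport_lt C_nd C'_itv C'_nd tm tM Ca Cb ab)
  (fun a Ca => transport_mem C_nd C'_itv C'_nd tm tM Ca)
  (fun z Cz => ex_intro _ (transport (component tau2 y0) (component tau1 x) z)
     (conj (transport_mem C'_nd C_itv C_nd (iff_sym tm) (iff_sym tM) Cz)
           (transportK C'_nd C_itv C_nd (iff_sym tm) (iff_sym tM) Cz)))
  (component_refl tau1 x) e0.
exists d => // y hy cy.
have ecy := component_eq cy.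
have nSy1 : ~ degenerate_pts tau1 y by apply/nondegenerate_componentP; rewrite -ecy.
have hy' : h y = transport (component tau1 x) (component tau2 y0) y.
  by rewrite glue_nondegenerate // -ecy ey.
apply: He.
- by rewrite hy' hx; exact: Hd.
- by rewrite ec hy'; exact: (transport_mem C_nd C'_itv C'_nd tm tM cy).
Qed.

End Glue.

Lemma homeomorphic_glue (R : realType) (tau1 tau2 : set (set R)) pi sg pii sgi :
  finer_than_eta tau1 -> locally_connected_top tau1 ->
  finer_than_eta tau2 -> locally_connected_top tau2 ->
  (forall x, ~ degenerate_pts tau1 x ->
    exists y, [/\ ~ degenerate_pts tau2 y, pi (component tau1 x) = component tau2 y &
                  end_type (component tau2 y) = end_type (component tau1 x)]) ->
  (forall x, ~ degenerate_pts tau2 x ->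
    exists y, [/\ ~ degenerate_pts tau1 y, pii (component tau2 x) = component tau1 y &
                  end_type (component tau1 y) = end_type (component tau2 x)]) ->
  (forall x, degenerate_pts tau1 x -> degenerate_pts tau2 (sg x)) ->
  (forall x, degenerate_pts tau2 x -> degenerate_pts tau1 (sgi x)) ->
  (forall x, ~ degenerate_pts tau1 x -> pii (pi (component tau1 x)) = component tau1 x) ->
  (forall x, ~ degenerate_pts tau2 x -> pi (pii (component tau2 x)) = component tau2 x) ->
  (forall x, degenerate_pts tau1 x -> sgi (sg x) = x) ->
  (forall x, degenerate_pts tau2 x -> sg (sgi x) = x) ->
  homeomorphic_top tau1 tau2.
Proof.
move=> [t1 e1] l1 [t2 e2] l2 pi1 pi2 sg1 sg2 piK piiK sgK sgiK.
exists (glue tau1 pi sg), (glue tau2 pii sgi); split.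
- exact: glue_cancel.
- exact: glue_cancel.
- exact: glue_continuous.
- exact: glue_continuous.
Qed.

Definition finite_code T (A : set T) : option nat :=
  if pselect (finite_set A) is left P then Some (projT1 (cid P)) else None.

Lemma finite_code_card_eq T U (A : set T) (B : set U) : countable A -> countable B ->
  finite_code A = finite_code B -> A #= B.
Proof.
move=> cA cB; rewrite /finite_code; case: pselect => [PA|nA]; case: pselect => [PB|nB] //.
- case=> e; have hA := projT2 (cid PA); have hB := projT2 (cid PB).
  by rewrite /= e in hA; exact: card_eq_trans hA (card_esym hB).
- by move=> _; exact: card_eq_trans (eq_card_nat cA nA) (card_esym (eq_card_nat cB nB)).
Qed.

Lemma card_eq_inverse {T U : pointedType} (A : set T) (B : set U) : A #= B ->
  exists f g, [/\ forall a, A a -> B (f a), forall b, B b -> A (g b),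
    forall a, A a -> g (f a) = a & forall b, B b -> f (g b) = b].
Proof.
move=> /card_set_bijP [f [ff fi fs]].
pose g b := xget point [set a | A a /\ f a = b].
have gP b : B b -> A (g b) /\ f (g b) = b.
  move=> Bb; have [a Aa fab] := fs _ Bb.
  by apply: (xgetPex point (P := [set a | A a /\ f a = b])); exists a.
exists f, g; split.
- by move=> a Aa; exact: ff.
- by move=> b /gP [].
- move=> a Aa; have [Ag e] := gP _ (ff _ Aa).
  by apply: fi => //; rewrite inE.
- by move=> b /gP [].
Qed.

Section Classification.
Variable R : realType.

Definition components_of_type (tau : set (set R)) (t : bool * bool) :=
  [set C : set R | exists x, [/\ ~ degenerate_pts tau x, C = component tau x & end_type C = t]].

Lemma components_of_type_countable tau t : (@Defs.eta R) `<=` tau ->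
  countable (components_of_type tau t).
Proof.
move=> eta_tau; apply/countable_injP.
pose rat_in (C : set R) : rat := xget 0 [set q : rat | C (ratr q)].
exists (fun C => pickle (rat_in C)).
move=> C1 C2; rewrite !inE => -[x1 [n1 -> _]] [x2 [n2 -> _]] /(pcan_inj pickleK) e.
have h1 := xgetPex 0 (component_rat eta_tau n1); have h2 := xgetPex 0 (component_rat eta_tau n2).
move: h1; rewrite -/(rat_in _) e => h1.
exact: etrans (component_eq h1) (esym (component_eq h2)).
Qed.

(* The complete homeomorphism invariant: the cardinality of the set of degenerate
   points (countable, or that of R) and the number of non-degenerate components
   of each of the four end types. *)
Definition degenerate_code (A : set R) : option (option nat) :=
  if pselect (countable A) is left _ then Some (finite_code A) else None.

Definition topology_code (tau : set (set R)) :=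
  (degenerate_code (degenerate_pts tau),
   finite_code (components_of_type tau (false, false)),
   finite_code (components_of_type tau (false, true)),
   finite_code (components_of_type tau (true, false)),
   finite_code (components_of_type tau (true, true))).

Lemma degenerate_code_card_eq tau1 tau2 :
  finer_than_eta tau1 -> locally_connected_top tau1 ->
  finer_than_eta tau2 -> locally_connected_top tau2 ->
  degenerate_code (degenerate_pts tau1) = degenerate_code (degenerate_pts tau2) ->
  degenerate_pts tau1 #= degenerate_pts tau2.
Proof.
move=> [t1 e1] l1 [t2 e2] l2; rewrite /degenerate_code.
case: pselect => c1; case: pselect => c2 //; first by case; exact: finite_code_card_eq.
move=> _; apply: card_eq_trans (card_degenerate_pts t1 e1 l1 c1) _.
exact/card_esym/card_degenerate_pts.
Qed.

Lemma eq_topology_code_homeomorphic tau1 tau2 :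
  finer_than_eta tau1 -> locally_connected_top tau1 ->
  finer_than_eta tau2 -> locally_connected_top tau2 ->
  topology_code tau1 = topology_code tau2 -> homeomorphic_top tau1 tau2.
Proof.
move=> f1 l1 f2 l2 [es e00 e01 e10 e11].
have [sg [sgi [s1 s2 s3 s4]]] := card_eq_inverse (degenerate_code_card_eq f1 l1 f2 l2 es).
have CC t : components_of_type tau1 t #= components_of_type tau2 t.
  have c1 := components_of_type_countable t f1.2.
  have c2 := components_of_type_countable t f2.2.
  by apply: finite_code_card_eq c1 c2 _; case: t => [[] []].
have /choice [F HF] : forall t, exists fg : (set R -> set R) * (set R -> set R),
    [/\ forall a, components_of_type tau1 t a -> components_of_type tau2 t (fg.1 a),
        forall b, components_of_type tau2 t b -> components_of_type tau1 t (fg.2 b),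
        forall a, components_of_type tau1 t a -> fg.2 (fg.1 a) = a &
        forall b, components_of_type tau2 t b -> fg.1 (fg.2 b) = b].
  by move=> t; have [f [g H]] := card_eq_inverse (CC t); exists (f, g).
pose pi C := (F (end_type C)).1 C.
pose pii C := (F (end_type C)).2 C.
have piM x : ~ degenerate_pts tau1 x ->
    components_of_type tau2 (end_type (component tau1 x)) (pi (component tau1 x)).
  by move=> nS; have [+ _ _ _] := HF (end_type (component tau1 x)); apply; exists x.
have piiM x : ~ degenerate_pts tau2 x ->
    components_of_type tau1 (end_type (component tau2 x)) (pii (component tau2 x)).
  by move=> nS; have [_ + _ _] := HF (end_type (component tau2 x)); apply; exists x.
apply: (homeomorphic_glue (pi := pi) (sg := sg) (pii := pii) (sgi := sgi)) => //.
- by move=> x /piM [y [nSy e ty]]; exists y; split; rewrite -?e.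
- by move=> x /piiM [y [nSy e ty]]; exists y; split; rewrite -?e.
- move=> x nS; have [y [nSy e ty]] := piM x nS.
  rewrite /pii ty; have [_ _ + _] := HF (end_type (component tau1 x)); apply; by exists x.
- move=> x nS; have [y [nSy e ty]] := piiM x nS.
  rewrite /pi ty; have [_ _ _ +] := HF (end_type (component tau2 x)); apply; by exists x.
Qed.

End Classification.

Theorem theorem4 (R : realType) :
  (exists rep : nat -> set (set R),
     forall tau : set (set R),
       finer_than_eta tau -> locally_connected_top tau ->
       exists n : nat, homeomorphic_top tau (rep n))
  /\
  (forall tau : set (set R),
     finer_than_eta tau -> locally_connected_top tau -> separable_top tau ->
     (exists F : R -> R, tau = tau_of F) /\
     countable (Gamma tau) /\ @closed R^o (Gamma tau)).
Proof.
split.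
- pose P n : set (set (set R)) := [set tau | [/\ finer_than_eta tau,
    locally_connected_top tau & pickle (topology_code tau) = n]].
  exists (fun n => xget setT (P n)) => tau f l.
  exists (pickle (topology_code tau)); set n := pickle _.
  have [f' l' e] : P n (xget setT (P n)) by apply: xgetPex; exists tau.
  exact/(eq_topology_code_homeomorphic f l f' l')/esym/(pcan_inj pickleK e).
- move=> tau [t e] l [D [Dc Dd]]; split; last split.
  + by eexists; exact: (tau_eq_graph_label t e l Dc Dd).
  + exact: separable_Gamma_countable t e l D Dc Dd.
  + exact: Gamma_closed.
Qed.
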